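(* Let $S$ be oriented and let $(T,b)$ be a branched ideal triangulation of $(S,V)$. Let $\epsilon_{+}$ (resp. $\epsilon_-$) be the number of abstract triangles $t$ of $T$ with $*_{(t,b)}=+1$ (resp. $-1$). Then $\epsilon_+=\epsilon_-$.
   Context: $S$ is a compact closed connected oriented surface and $V\subset S$ is a finite set of marked points with $\chi(S)-|V|<0$. An ideal triangulation of $(S,V)$ is a possibly loose triangulation of $S$ with vertex set $V$. A branching $b$ orients all edges so that on each abstract triangle $t$ the orientations are induced by a total order $v_0<v_1<v_2$ of its vertices, edges pointing to the larger endpoint. The sign $*_{(t,b)}\in\{\pm1\}$ is $+1$ if the orientation of $t$ determined by the ordered triple $(v_0,v_1,v_2)$ agrees with the orientation of $S$, and $-1$ otherwise. Thus $\sum_t *_{(t,b)}(t,b)$ is the simplicial fundamental cycle of $S$. *)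

From HB Require Import structures.
From mathcomp Require Import all_boot all_order all_algebra all_fingroup.
Set Implicit Arguments. Unset Strict Implicit. Unset Printing Implicit Defensive.

(* Abstract triangles form a finite type [T].  Each triangle has corners
   0,1,2 : 'I_3, listed in the cyclic order given by the orientation of S.
   Side (t,i) is the side of t going from corner i to corner (i+1 mod 3),
   oriented as part of the boundary of t (with S's orientation).
   [glue] pairs the sides: a fixed-point-free involution.  Since S is oriented
   and all triangles carry the orientation of S, the gluing of side (t,i) to
   side glue (t,i) = (t',j) is orientation reversing: corner i of t is
   identified with corner j+1 of t', and corner i+1 of t with corner j of t'. *)

Definition side (T : finType) := (T * 'I_3)%type.

Definition is_gluing (T : finType) (glue : side T -> side T) : Prop :=
  involutive glue /\ (forall s, glue s != s).

Definition glue_adj (T : finType) (glue : side T -> side T) : rel T :=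
  fun t t' => [exists i : 'I_3, (glue (t, i)).1 == t'].

Definition glued_connected (T : finType) (glue : side T -> side T) : Prop :=
  forall t t' : T, connect (glue_adj glue) t t'.

(* A branching: for each triangle t, [b t : {perm 'I_3}] lists the corners
   in increasing order: v_k = corner (b t k), so v_0 < v_1 < v_2.
   The rank of corner c is (b t)^-1 c. *)
Definition rank (T : finType) (b : T -> {perm 'I_3}) (t : T) (c : 'I_3) : nat :=
  (b t)^-1%g c.

(* The edge induced on side (t,i) points to its larger endpoint; it agrees
   with the boundary orientation of t iff rank(corner i) < rank(corner i+1). *)
Definition side_forward (T : finType) (b : T -> {perm 'I_3}) (s : side T) : bool :=
  rank b s.1 s.2 < rank b s.1 (ordS s.2).

(* Compatibility: the two sides glued into one edge of the triangulation
   induce the same orientation on that edge.  Since the gluing reverses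
   boundary orientations, this means the forward flags are opposite. *)
Definition is_branching (T : finType) (glue : side T -> side T)
    (b : T -> {perm 'I_3}) : Prop :=
  forall s : side T, side_forward b (glue s) = ~~ side_forward b s.

(* *_(t,b) = +1 iff the orientation (v_0,v_1,v_2) agrees with that of S,
   i.e. iff (b t 0, b t 1, b t 2) is a cyclic rotation of (0,1,2),
   i.e. iff b t is an even permutation. *)
Definition star (T : finType) (b : T -> {perm 'I_3}) (t : T) : int :=
  if odd_perm (b t) then (-1)%R else 1%R.

From HB Require Import structures.
From mathcomp Require Import all_boot all_order all_algebra all_fingroup.
From mathcomp Require Import zify.

(* Orient the sides of every triangle by the boundary orientation
   of S.  A side is "forward" when its branching orientation agrees with its
   boundary orientation.  Since the gluing reverses boundary orientations and
   the branching orientations of two glued sides agree, [glue] is a bijection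
   on sides exchanging forward and backward sides: there are as many forward
   as backward sides in total.
   Inside one triangle, the forward sides are the cyclic ascents of the rank
   function of its corners.  A transposition of the three corners reverses
   their cyclic order and so turns k cyclic ascents into 3 - k; the identity
   has 2 ascents, so by decomposing into transpositions an even permutation
   has 2 ascents and an odd one has 1.  Hence, with e (resp. o) triangles of
   sign +1 (resp. -1), counting forward and backward sides gives
   o + 2e = 2o + e, i.e. e = o. *)

Definition cyclic_ascents (f : 'I_3 -> nat) : nat :=
  \sum_(i < 3) (f i < f (ordS i)).

Lemma eq_cyclic_ascents (f g : 'I_3 -> nat) :
  f =1 g -> cyclic_ascents f = cyclic_ascents g.
Proof. by move=> efg; apply: eq_bigr => i _; rewrite !efg. Qed.

(* A transposition of two corners reverses their cyclic order. *)
Lemma tperm_reverses_cycle (x y : 'I_3) : x != y ->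
  forall i, tperm x y (ordS (tperm x y i)) = ord_pred i.
Proof.
move=> nxy i; apply/val_inj; rewrite /tperm !permE.
by move: x y i nxy; do 3!case=> [[|[|[|//]]]] ?.
Qed.

(* Reading an injective labelling in both cyclic directions, every pair of
   consecutive labels is an ascent exactly once. *)
Lemma cyclic_ascents_reversed {f : 'I_3 -> nat} : injective f ->
  cyclic_ascents f + \sum_(i < 3) (f (ordS i) < f i) = 3.
Proof.
move=> f_inj; rewrite /cyclic_ascents -big_split /=.
rewrite (eq_bigr (fun=> 1)) ?sum1_card ?card_ord // => i _.
have ne_f : f i != f (ordS i).
  by rewrite (inj_eq f_inj); case: i => [[|[|[|]]]].
by case: ltngtP ne_f.
Qed.

Lemma cyclic_ascents_tperm (f : 'I_3 -> nat) (x y : 'I_3) :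
  injective f -> x != y ->
  cyclic_ascents (f \o tperm x y) = 3 - cyclic_ascents f.
Proof.
move=> f_inj nxy; rewrite -[in RHS](cyclic_ascents_reversed f_inj) addKn.
rewrite /cyclic_ascents (reindex_inj (@perm_inj _ (tperm x y))) /=.
under eq_bigr => i _ do rewrite tpermK tperm_reverses_cycle //.
rewrite (reindex_inj (@ordS_inj 3)) /=.
by under eq_bigr => i _ do rewrite ordSK.
Qed.

Lemma cyclic_ascents_perm (s : {perm 'I_3}) :
  cyclic_ascents (fun i => s i) = if odd_perm s then 1 else 2.
Proof.
case: (prod_tpermP s) => ts -> {s}.
elim: ts => [|[x y] ts IHts] /=.
  move=> _; rewrite big_nil odd_perm1 /cyclic_ascents.
  under eq_bigr => i _ do rewrite !perm1.
  by rewrite !big_ord_recr big_ord0.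
case/andP=> /= nxy dts; rewrite big_cons odd_mul_tperm nxy /=.
set s := (\prod_(t <- ts) _)%g in IHts *.
rewrite (@eq_cyclic_ascents _ ((fun i => s i : nat) \o tperm x y)); last first.
  by move=> i; rewrite /= permM.
rewrite cyclic_ascents_tperm ?IHts //; first by case: odd_perm.
by move=> i j /val_inj /perm_inj.
Qed.

Lemma count_exchanged (X : finType) (g : X -> X) (P : pred X) :
  injective g -> (forall x, P (g x) = ~~ P x) -> \sum_x P x = \sum_x ~~ P x.
Proof.
by move=> g_inj gP; rewrite (reindex_inj g_inj); apply: eq_bigr => x _; rewrite gP.
Qed.

Lemma sum_if_nat (X : finType) (P : pred X) (m n : nat) :
  \sum_x (if P x then m else n) = #|P| * m + #|predC P| * n.
Proof.
rewrite (bigID P) /= -!sum_nat_const.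
by congr (_ + _); apply: eq_bigr => x; [move-> | move/negbTE->].
Qed.

Section BranchedTriangulation.

Variables (T : finType) (glue : side T -> side T) (b : T -> {perm 'I_3}).

Lemma sum_over_sides (F : side T -> nat) :
  \sum_(s : side T) F s = \sum_t \sum_(i < 3) F (t, i).
Proof. by rewrite pair_bigA; apply: eq_bigr => -[]. Qed.

Definition forward_sides (t : T) : nat := \sum_(i < 3) side_forward b (t, i).

(* The forward sides of t are the cyclic ascents of its rank function
   (b t)^-1, which has the parity of b t: a triangle with sign +1 has two
   forward sides, one with sign -1 has one. *)
Lemma forward_sidesE (t : T) :
  forward_sides t = if odd_perm (b t) then 1 else 2.
Proof. by rewrite -odd_permV -cyclic_ascents_perm. Qed.

Lemma backward_sidesE (t : T) :
  \sum_(i < 3) ~~ side_forward b (t, i) = if odd_perm (b t) then 2 else 1.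
Proof.
have split3 : forward_sides t + \sum_(i < 3) ~~ side_forward b (t, i) = 3.
  rewrite -big_split /= (eq_bigr (fun=> 1)) ?sum1_card ?card_ord // => i _.
  by case: side_forward.
by move: split3; rewrite forward_sidesE; case: odd_perm; lia.
Qed.

(* Gluing exchanges forward and backward sides, so there are as many of
   each kind; here the sides are grouped by triangle. *)
Lemma forward_backward_balance :
  is_gluing glue -> is_branching glue b ->
  \sum_t forward_sides t = \sum_t \sum_(i < 3) ~~ side_forward b (t, i).
Proof.
move=> [glueK _] bP; rewrite /forward_sides -(sum_over_sides (side_forward b)).
rewrite -(sum_over_sides (fun s => ~~ side_forward b s)).
exact: count_exchanged (inv_inj glueK) bP.
Qed.

Lemma star_pos (t : T) : (star b t == 1%R) = ~~ odd_perm (b t).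
Proof. by rewrite /star; case: odd_perm. Qed.

Lemma star_neg (t : T) : (star b t == (-1)%R) = odd_perm (b t).
Proof. by rewrite /star; case: odd_perm. Qed.

End BranchedTriangulation.

Theorem lemma2p1 (T : finType) (glue : side T -> side T)
    (Hglue : is_gluing glue) (Hconn : glued_connected glue)
    (Hne : 0 < #|T|)
    (b : T -> {perm 'I_3}) (Hb : is_branching glue b) :
  #|[set t : T | star b t == 1%R]| = #|[set t : T | star b t == (-1)%R]|.
Proof.
pose odd_b := fun t => odd_perm (b t).
have card_pos : #|[set t : T | star b t == 1%R]| = #|predC odd_b|.
  by apply: eq_card => t; rewrite inE star_pos.
have card_neg : #|[set t : T | star b t == (-1)%R]| = #|odd_b|.
  by apply: eq_card => t; rewrite inE star_neg.
have := @forward_backward_balance T glue b Hglue Hb.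
rewrite (eq_bigr _ (fun t _ => @forward_sidesE T b t)).
rewrite (eq_bigr _ (fun t _ => @backward_sidesE T b t)) !sum_if_nat.
have arith (o e : nat) : o * 1 + e * 2 = o * 2 + e * 1 -> e = o by lia.
by move/arith; rewrite card_pos card_neg.
Qed.
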